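(* For every prime power $q$ and every integer $n\ge1$, $$\sum_{\lambda\vdash n}\frac{\prod_{s=1}^{\ell(\lambda)-1}(1-q^s)}{a_\lambda(q)}=\frac{1}{q^n-1}.$$
   Context: The sum runs over all partitions $\lambda=(\lambda_1\ge\dots\ge\lambda_m\ge1)$ of $n$; $\ell(\lambda)=m$ is the length; empty products equal $1$. Writing $t_i$ for the number of parts of $\lambda$ equal to $i$, $|\lambda|=\sum_i\lambda_i$ and $n(\lambda)=\sum_{i=1}^{m}(i-1)\lambda_i$, one sets $a_\lambda(q)=q^{|\lambda|+2n(\lambda)}\prod_{i\ge1}\prod_{j=1}^{t_i}(1-q^{-j})$; this equals the order of the automorphism group of the $\mathbb F_q[T]$-module $\bigoplus_{i=1}^m\mathbb F_q[T]/(T^{\lambda_i})$. *)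

From mathcomp Require Import all_boot all_order all_algebra.
Set Implicit Arguments. Unset Strict Implicit. Unset Printing Implicit Defensive.
Import GRing.Theory Num.Theory.
Local Open Scope ring_scope.

Definition prime_power (q : nat) : Prop :=
  exists p k : nat, [/\ prime p, (0 < k)%N & q = (p ^ k)%N].

(* A partition of n is encoded (bijectively) as a nonincreasing n-tuple of
   values in {0,...,n} summing to n: the parts are the nonzero entries
   (a partition of n has at most n parts, each at most n). *)
Definition is_part_tuple (n : nat) (t : n.-tuple 'I_n.+1) : bool :=
  sorted geq [seq val i | i <- t] && (sumn [seq val i | i <- t] == n).

Definition parts (n : nat) (t : n.-tuple 'I_n.+1) : seq nat :=
  [seq x <- [seq val i | i <- t] | (0 < x)%N].

Definition nlam (lam : seq nat) : nat :=
  (\sum_(i < size lam) i * nth 0 lam i)%N.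

(* a_lambda(q) = q^{|lambda| + 2 n(lambda)} prod_{i>=1} prod_{j=1}^{t_i} (1 - q^{-j}),
   with t_i = multiplicity of i in lambda; every part is <= |lambda|, so the
   factors with i > |lambda| are empty products. *)
Definition a_lam (q : rat) (lam : seq nat) : rat :=
  q ^+ (sumn lam + 2 * nlam lam)%N *
  \prod_(1 <= i < (sumn lam).+1)
     \prod_(1 <= j < (count_mem i lam).+1) (1 - q ^- j).

Definition numer (q : rat) (lam : seq nat) : rat :=
  \prod_(1 <= s < size lam) (1 - q ^+ s).

(* Sort the partitions by length.  Deleting the first column of the Young diagram
   of a partition lambda of n with m parts leaves a partition mu of n - m with at
   most m parts, and a_lambda(q) = q^(m^2) (r;r)_(m - l(mu)) a_mu(q), where r = 1/q.
   Induction on this recursion, whose step is the q-Vandermonde identity, shows that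
   the sum of 1/a_lambda over the partitions of n + 1 with m + 1 parts is
   r^(n + 1 + m(m + 1)) [n choose m]_r / (r;r)_(m + 1).  Since the numerator is
   (q;q)_m = (-1)^m q^C(m + 1, 2) (r;r)_m, the whole sum becomes r^(n + 1) / (1 - r^(n + 1))
   times sum_k (-1)^k r^C(k + 1, 2) [n + 1 choose k + 1]_r, and this alternating sum is 1
   by Rothe's q-binomial theorem at x = -1. *)

From mathcomp Require Import all_boot all_order all_algebra.
From mathcomp Require Import ring zify.
Set Implicit Arguments.
Unset Strict Implicit.
Unset Printing Implicit Defensive.
Import Order.TTheory GRing.Theory Num.Theory.

Definition is_partition (l : seq nat) := sorted geq l && all (fun x => 0 < x) l.

Definition add_col (m : nat) (mu : seq nat) := map succn mu ++ nseq (m - size mu) 1.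

Definition del_col (l : seq nat) := [seq x.-1 | x <- l & 1 < x].

Lemma geq_trans : transitive geq.
Proof. by move=> m n p /= leqnm /leq_trans; apply. Qed.

Lemma sorted_geq_nseq c x : sorted geq (nseq c x).
Proof. by elim: c => //= -[|c] //= ->; rewrite leqnn. Qed.

Lemma mem_leq_sumn l x : x \in l -> x <= sumn l.
Proof. by elim: l => //= y l IHl; rewrite in_cons => /orP[/eqP-> | /IHl]; lia. Qed.

Lemma size_leq_sumn l : all (fun x => 0 < x) l -> size l <= sumn l.
Proof. by elim: l => //= x l IHl /andP[x_gt0 /IHl]; lia. Qed.

Lemma size_add_col m mu : size mu <= m -> size (add_col m mu) = m.
Proof. by rewrite size_cat size_map size_nseq; lia. Qed.

Lemma sumn_add_col m mu : size mu <= m -> sumn (add_col m mu) = sumn mu + m.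
Proof.
have sumn_succ : sumn (map succn mu) = sumn mu + size mu.
  by elim: mu => //= x mu ->; lia.
by rewrite sumn_cat sumn_nseq mul1n sumn_succ; lia.
Qed.

Lemma all_add_col f m mu :
  all (fun x => x <= f.+1) (add_col m mu) = all (fun x => x <= f) mu.
Proof. by rewrite all_cat all_map all_nseq orbT andbT. Qed.

Lemma is_partition_add_col m mu : is_partition mu -> is_partition (add_col m mu).
Proof.
case/andP=> sorted_mu _; apply/andP; split; last first.
  by rewrite all_cat all_map all_nseq orbT andbT; apply/allP.
rewrite (sorted_pairwise geq_trans) pairwise_cat; apply/and3P; split.
- by apply/allrelP => _ y /mapP[x _ ->] /nseqP[-> _].
- by rewrite pairwise_map -(sorted_pairwise geq_trans).
- by rewrite -(sorted_pairwise geq_trans) sorted_geq_nseq.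
Qed.

Lemma add_colK m mu : all (fun x => 0 < x) mu -> del_col (add_col m mu) = mu.
Proof.
rewrite /del_col filter_cat filter_nseq /= cats0.
by elim: mu => //= x mu IHmu /andP[x_gt0 /IHmu]; rewrite ltnS x_gt0 => /= ->.
Qed.

Lemma del_colK l : is_partition l -> add_col (size l) (del_col l) = l.
Proof.
elim: l => //= x l IHl /andP[/=]; rewrite (path_sortedE geq_trans).
case/andP=> x_ge sorted_l /andP[x_gt0 pos_l].
have {IHl} IH : add_col (size l) (del_col l) = l by apply: IHl; apply/andP.
rewrite /del_col /=; case: ifP => x_gt1.
  by rewrite /add_col /= subSS -/(add_col _ _) IH prednK // ltnW.
have -> : x = 1 by lia.
have l1 : all (pred1 1) l.
  by apply/allP => y y_l /=; have := allP x_ge y y_l; have := allP pos_l y y_l; lia.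
by rewrite (all_pred1P _ _ l1) filter_nseq /= /add_col /= size_nseq.
Qed.

Lemma is_partition_del_col l : is_partition l -> is_partition (del_col l).
Proof.
case/andP=> sorted_l _; apply/andP; split.
  apply: (homo_sorted (e := geq)); first by move=> x y /=; lia.
  exact: (sorted_filter geq_trans).
by rewrite all_map; apply/allP => x; rewrite mem_filter => /andP[/= x_gt1 _]; lia.
Qed.

Lemma size_del_col l : size (del_col l) <= size l.
Proof. by rewrite size_map size_filter count_size. Qed.

(* The partitions of [n] with exactly [m] parts, all at most [f]: removing the
   first column of the Young diagram leaves [n - m] boxes in at most [m] rows. *)
Fixpoint partitions (f n m : nat) : seq (seq nat) :=
  match m, f with
  | 0, _ => if n == 0 then [:: [::]] else [::]
  | _.+1, 0 => [::]
  | _.+1, f'.+1 =>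
      if m <= n then map (add_col m) (flatten [seq partitions f' (n - m) k | k <- iota 0 m.+1])
      else [::]
  end.

Lemma partitions0 f n : partitions f n 0 = if n == 0 then [:: [::]] else [::].
Proof. by case: f. Qed.

Lemma partitionsS f n m :
  partitions f.+1 n m.+1 =
  if m < n then map (add_col m.+1) (flatten [seq partitions f (n - m.+1) k | k <- iota 0 m.+2])
  else [::].
Proof. by []. Qed.

Lemma mem_partitions f n m l :
  (l \in partitions f n m)
  = [&& is_partition l, sumn l == n, size l == m & all (fun x => x <= f) l].
Proof.
elim: f n m l => [|f IHf] n [|m] l; last rewrite partitionsS.
- by case: n => [|n]; case: l => [|x l]; rewrite /= ?in_cons ?in_nil ?andbF.
- rewrite in_nil; apply/esym/negbTE; apply/and4P=> -[/andP[_ pos_l] _ /eqP size_l bound_l].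
  by case: l size_l pos_l bound_l => //= x l _ /andP[x_gt0 _] /andP[x_le0 _]; lia.
- by case: n => [|n]; case: l => [|x l]; rewrite /= ?in_cons ?in_nil ?andbF.
case: ifP => [le_mn | lt_nm]; last first.
  apply/esym/negbTE; apply/and4P=> -[/andP[_ pos_l] /eqP sum_l /eqP size_l _].
  by move: (size_leq_sumn pos_l); rewrite sum_l size_l lt_nm.
apply/mapP/and4P => [[mu /flatten_mapP[k k_m mu_in] ->] |
                     [part_l /eqP sum_l /eqP size_l bound_l]].
  rewrite IHf mem_iota in mu_in k_m.
  case/and4P: mu_in => part_mu /eqP sum_mu /eqP size_mu bound_mu.
  have le_mu_m : size mu <= m.+1 by rewrite size_mu -ltnS.
  rewrite is_partition_add_col // sumn_add_col // size_add_col // all_add_col bound_mu.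
  by split=> //; apply/eqP; lia.
have del_l := del_colK part_l; rewrite size_l in del_l.
have le_del_m : size (del_col l) <= m.+1 by rewrite -size_l size_del_col.
exists (del_col l); last by rewrite del_l.
apply/flatten_mapP; exists (size (del_col l)); first by rewrite mem_iota.
rewrite IHf is_partition_del_col // eqxx -(all_add_col f m.+1) del_l bound_l !andbT /=.
by rewrite -sum_l -{2}del_l sumn_add_col ?addnK.
Qed.

Lemma uniq_flatten_fibres (I T : eqType) (h : T -> I) (t : I -> seq T) (s : seq I) :
  uniq s -> (forall i, uniq (t i)) -> (forall i x, x \in t i -> h x = i) ->
  uniq (flatten [seq t i | i <- s]).
Proof.
move=> + uniq_t ht; elim: s => //= i s IHs /andP[i_notin_s /IHs uniq_flat].
rewrite cat_uniq uniq_t uniq_flat andbT; apply/hasPn => x /flatten_mapP[j j_s x_j].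
by apply: contraNN i_notin_s => x_i; rewrite -(ht _ _ x_i) (ht _ _ x_j).
Qed.

Lemma uniq_partitions f n m : uniq (partitions f n m).
Proof.
elim: f n m => [|f IHf] n [|m]; try by rewrite /=; case: (n == 0).
rewrite partitionsS; case: ifP => // _; rewrite map_inj_in_uniq.
  apply: (uniq_flatten_fibres (h := size)) => [|k|k mu]; rewrite ?iota_uniq ?IHf //.
  by rewrite mem_partitions => /and4P[_ _ /eqP].
move=> mu1 mu2 /flatten_mapP[k1 _ mu1_in] /flatten_mapP[k2 _ mu2_in] eq_add_col.
have pos k mu : mu \in partitions f (n - m.+1) k -> all (fun x => 0 < x) mu.
  by rewrite mem_partitions => /and4P[/andP[]].
by rewrite -(add_colK m.+1 (pos _ _ mu1_in)) eq_add_col add_colK // (pos _ _ mu2_in).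
Qed.

Definition all_partitions n := flatten [seq partitions n n m | m <- iota 0 n.+1].

Lemma mem_all_partitions n l : (l \in all_partitions n) = is_partition l && (sumn l == n).
Proof.
apply/flatten_mapP/andP => [[m _] | [part_l /eqP sum_l]].
  by rewrite mem_partitions => /and4P[-> -> _ _].
have /andP[_ pos_l] := part_l.
exists (size l); first by rewrite mem_iota ltnS -sum_l size_leq_sumn.
rewrite mem_partitions part_l sum_l !eqxx /=.
by apply/allP => x /mem_leq_sumn; rewrite sum_l.
Qed.

Lemma uniq_all_partitions n : uniq (all_partitions n).
Proof.
apply: (uniq_flatten_fibres (h := size)) => [|m|m l]; rewrite ?iota_uniq ?uniq_partitions //.
by rewrite mem_partitions => /and4P[_ _ /eqP].
Qed.

Lemma sorted_geq_zeros s :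
  sorted geq s -> s = [seq x <- s | 0 < x] ++ nseq (size s - size [seq x <- s | 0 < x]) 0.
Proof.
elim: s => //= x s IHs; rewrite (path_sortedE geq_trans) => /andP[x_ge /IHs {1}->].
case: ifP => [x_gt0 | /negbT]; first by rewrite /= subSS.
rewrite -eqn0Ngt => /eqP x0; rewrite x0 in x_ge *.
have -> : [seq x <- s | 0 < x] = [::].
  rewrite (eq_in_filter (a2 := pred0)) ?filter_pred0 // => y /(allP x_ge).
  by rewrite /= leqn0 => /eqP->.
by rewrite /= subn0.
Qed.

Lemma val_part_tuple n (t : n.-tuple 'I_n.+1) :
  is_part_tuple t -> [seq val i | i <- t] = parts t ++ nseq (n - size (parts t)) 0.
Proof.
by case/andP=> /sorted_geq_zeros val_t _; rewrite {1}val_t size_map size_tuple.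
Qed.

Lemma sum_part_tuples (R : nmodType) n (F : seq nat -> R) :
  (\sum_(t : n.-tuple 'I_n.+1 | is_part_tuple t) F (parts t)
   = \sum_(l <- all_partitions n) F l)%R.
Proof.
pose part_tuples := enum (fun t : n.-tuple 'I_n.+1 => is_part_tuple t).
transitivity (\sum_(l <- [seq parts t | t <- part_tuples]) F l)%R.
  by rewrite big_map big_enum.
apply/perm_big/uniq_perm; rewrite ?uniq_all_partitions //.
  rewrite map_inj_in_uniq ?enum_uniq // => t1 t2; rewrite !mem_enum => t1_part t2_part eq_parts.
  by apply/val_inj/(inj_map val_inj); rewrite !val_part_tuple // eq_parts.
move=> l; rewrite mem_all_partitions; apply/mapP/andP => [[t] | [part_l /eqP sum_l]].
  rewrite mem_enum => /[dup] /val_part_tuple val_t /andP[sorted_t /eqP sum_t] ->.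
  split; last by apply/eqP; rewrite -[RHS]sum_t val_t sumn_cat sumn_nseq mul0n addn0.
  by rewrite /is_partition /parts (sorted_filter geq_trans) // filter_all.
have size_l : size l <= n by rewrite -sum_l size_leq_sumn //; case/andP: part_l.
pose s := l ++ nseq (n - size l) 0.
have size_s : size (map (@inord n) s) == n by rewrite size_map size_cat size_nseq subnKC.
have val_s : [seq val i | i <- Tuple size_s] = s.
  rewrite /= -map_comp; apply: map_id_in => x.
  rewrite mem_cat => /orP[/mem_leq_sumn | /nseqP[-> _]]; last exact: inordK.
  by rewrite sum_l => le_xn; apply: inordK.
exists (Tuple size_s).
  rewrite mem_enum unfold_in /is_part_tuple val_s.
  rewrite sumn_cat sumn_nseq mul0n addn0 sum_l eqxx andbT.
  rewrite (sorted_pairwise geq_trans) pairwise_cat -!(sorted_pairwise geq_trans) sorted_geq_nseq.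
  by case/andP: part_l => -> _; rewrite !andbT; apply/allrelP => x y _ /nseqP[-> _].
rewrite /parts val_s filter_cat filter_nseq cats0; case/andP: part_l => _ pos_l.
by apply/esym/all_filterP.
Qed.

Local Open Scope ring_scope.

Section QBinomialRing.
Variables (R : comPzRingType) (r : R).

Definition qpoch (n : nat) : R := \prod_(1 <= j < n.+1) (1 - r ^+ j).

Fixpoint qbin (n k : nat) : R :=
  match n, k with
  | _, 0 => 1
  | 0, _.+1 => 0
  | n'.+1, k'.+1 => qbin n' k' + r ^+ k'.+1 * qbin n' k'.+1
  end.
Arguments qbin : simpl nomatch.

Lemma qpoch0 : qpoch 0 = 1.
Proof. by rewrite /qpoch big_geq. Qed.

Lemma qpochS n : qpoch n.+1 = qpoch n * (1 - r ^+ n.+1).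
Proof. by rewrite /qpoch big_nat_recr. Qed.

Lemma qbin0 n : qbin n 0 = 1.
Proof. by case: n. Qed.

Lemma qbinS n k : qbin n.+1 k.+1 = qbin n k + r ^+ k.+1 * qbin n k.+1.
Proof. by []. Qed.

Lemma qbin_small n k : (n < k)%N -> qbin n k = 0.
Proof.
elim: n k => [|n IHn] [|k] //= ltnk.
by rewrite !IHn ?mulr0 ?addr0 // ltnW.
Qed.

Lemma qbinn n : qbin n n = 1.
Proof. by elim: n => //= n ->; rewrite qbin_small // mulr0 addr0. Qed.

Lemma qbin_qpoch n k : (k <= n)%N -> qbin n k * qpoch k * qpoch (n - k) = qpoch n.
Proof.
elim: n k => [|n IHn] [|k] //= lekn; rewrite ?qbin0 ?qpoch0 ?mul1r ?subn0 //.
have E2 : qbin n k.+1 * qpoch k.+1 * qpoch (n - k) = qpoch n * (1 - r ^+ (n - k)).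
  case: (ltngtP k n) => [ltkn | | ->]; first last.
  - by rewrite qbin_small // subnn expr0 subrr !(mul0r, mulr0).
  - by move=> ltnk; exfalso; lia.
  by rewrite -(IHn _ ltkn) -(subnSK ltkn) (qpochS (n - k.+1)); ring.
transitivity (qbin n k * qpoch k * qpoch (n - k) * (1 - r ^+ k.+1)
              + r ^+ k.+1 * (qbin n k.+1 * qpoch k.+1 * qpoch (n - k))).
  by rewrite subSS qpochS; ring.
have -> : qpoch n.+1 = qpoch n * (1 - r ^+ k.+1 * r ^+ (n - k)).
  by rewrite qpochS -exprD addSn subnKC.
by rewrite IHn // E2; ring.
Qed.

Lemma qbin_vandermonde a b K :
  qbin (a + b) K = \sum_(k < K.+1) qbin a k * qbin b (K - k) * r ^+ (k * (b + k - K)).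
Proof.
elim: b K => [|b IHb] K.
  rewrite addn0 big_ord_recr /= subnn qbin0 big1 ?add0r => [|k _].
    by rewrite muln0 expr0 !mulr1.
  by rewrite (@qbin_small 0) ?subn_gt0 // mulr0 mul0r.
case: K => [|K].
  by rewrite big_ord_recr big_ord0 /= add0r !qbin0 mul0n expr0 !mulr1.
rewrite addnS qbinS !IHb [in RHS]big_ord_recr /= subnn qbin0 mulr1.
rewrite [X in _ + _ * X]big_ord_recr /= subnn qbin0 mulr1 mulrDr addrA mulr_sumr -big_split /=.
congr (_ + _).
  apply: eq_bigr => k _; have lekK : (k <= K)%N by rewrite -ltnS.
  rewrite subSn // qbinS; case: (leqP (K - k).+1 b) => hb.
    have E : r ^+ K.+1 * r ^+ (k * (b + k - K.+1))
             = r ^+ (K - k).+1 * r ^+ (k * (b + k - K)).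
      rewrite -!exprD (_ : b + k - K = (b + k - K.+1).+1)%N ?mulnS; [congr (_ ^+ _) | ]; lia.
    transitivity (qbin a k * qbin b (K - k) * r ^+ (k * (b + k - K)) +
      qbin a k * qbin b (K - k).+1 * (r ^+ K.+1 * r ^+ (k * (b + k - K.+1)))); first by ring.
    by rewrite E; ring.
  by rewrite (qbin_small hb) !(mulr0, mul0r, addr0); congr (_ * _ ^+ (_ * _)); lia.
by rewrite mulrCA -exprD; congr (_ * _ ^+ _); lia.
Qed.

Lemma qbinomial n x :
  \prod_(i < n) (1 + x * r ^+ i) = \sum_(k < n.+1) r ^+ 'C(k, 2) * qbin n k * x ^+ k.
Proof.
elim: n x => [|n IHn] x; first by rewrite big_ord0 big_ord1 qbin0 bin0n !expr0 !mulr1.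
have binS2 k : r ^+ 'C(k.+1, 2) = r ^+ 'C(k, 2) * r ^+ k by rewrite binS bin1 exprD.
rewrite big_ord_recl expr0 mulr1.
under eq_bigr do rewrite lift0 exprS mulrA.
rewrite IHn mulrDl mul1r mulr_sumr big_ord_recl [in RHS]big_ord_recl.
under eq_bigr do rewrite lift0 binS2 exprMn.
under [in RHS]eq_bigr do rewrite lift0 qbinS mulrDr mulrDl.
rewrite !qbin0 /= expr0 !mul1r -addrA; congr (_ + _).
rewrite big_split /= [LHS]addrC; congr (_ + _).
  by apply: eq_bigr => k _; rewrite binS2 exprMn exprS; ring.
rewrite [RHS]big_ord_recr /= qbin_small // !mulr0 mul0r addr0.
by apply: eq_bigr => k _; rewrite binS2 !exprS; ring.
Qed.

Lemma sum_qbin_alternating n :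
  \sum_(k < n.+2) (-1) ^+ k * r ^+ 'C(k, 2) * qbin n.+1 k = 0.
Proof.
have := qbinomial n.+1 (-1); rewrite big_ord_recl expr0 mulr1 subrr mul0r => /esym.
by under eq_bigr do rewrite mulrC mulrA.
Qed.

End QBinomialRing.

Section QBinomialField.
Variables (F : fieldType) (r : F).

Lemma qpochV n : r != 0 -> qpoch r n = (-1) ^+ n * r ^+ 'C(n.+1, 2) * qpoch r^-1 n.
Proof.
move=> r_neq0; elim: n => [|n IHn]; first by rewrite !qpoch0 expr0 mul1r mulr1.
have rn_neq0 : r ^+ n.+1 != 0 by rewrite expf_neq0.
by rewrite !qpochS IHn [in RHS]binS bin1 exprD (exprS (-1)) exprVn; field.
Qed.

Hypothesis r_not_root : forall j, (0 < j)%N -> r ^+ j != 1.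

Lemma subr1X_neq0 j : 1 - r ^+ j.+1 != 0.
Proof. by rewrite subr_eq0 eq_sym r_not_root. Qed.

Lemma qpoch_neq0 n : qpoch r n != 0.
Proof.
elim: n => [|n IHn]; first by rewrite qpoch0 oner_neq0.
by rewrite qpochS mulf_neq0 // subr1X_neq0.
Qed.

Lemma qbin_sym n k : (k <= n)%N -> qbin r n (n - k) = qbin r n k.
Proof.
move=> lekn; apply: (mulIf (mulf_neq0 (qpoch_neq0 k) (qpoch_neq0 (n - k)))).
rewrite !mulrA qbin_qpoch // -{2}(subKn lekn) mulrAC.
by rewrite qbin_qpoch ?leq_subr.
Qed.

Lemma qbin_absorb N k : qbin r N k * (1 - r ^+ N.+1) = qbin r N.+1 k.+1 * (1 - r ^+ k.+1).
Proof.
case: (leqP k N) => [lekN | ltNk]; last by rewrite !qbin_small ?mul0r.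
apply: (mulIf (mulf_neq0 (qpoch_neq0 k) (qpoch_neq0 (N - k)))).
transitivity (qpoch r N.+1); first by rewrite qpochS -(qbin_qpoch r lekN); ring.
by rewrite -(qbin_qpoch r (lekN : k.+1 <= N.+1)%N) subSS qpochS; ring.
Qed.

Lemma qbin_convolution N m :
  \sum_(j < m.+1) qbin r m.+1 j.+1 * qbin r N j * r ^+ (j * j.+1) = qbin r (N + m.+1) m.
Proof.
rewrite qbin_vandermonde; apply: eq_bigr => j _; have lejm : (j <= m)%N by rewrite -ltnS.
rewrite -subSS qbin_sym // [qbin r N j * _]mulrC; congr (_ * _ ^+ (_ * _)); lia.
Qed.

Lemma sum_alt_qbin_div N :
  \sum_(k < N.+1) (-1) ^+ k * r ^+ 'C(k.+1, 2) * qbin r N k / (1 - r ^+ k.+1)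
  = (1 - r ^+ N.+1)^-1.
Proof.
have absorb k : qbin r N k / (1 - r ^+ k.+1) = qbin r N.+1 k.+1 / (1 - r ^+ N.+1).
  by apply/eqP; rewrite eqr_div ?subr1X_neq0 // qbin_absorb.
have alt1 : \sum_(k < N.+1) (-1) ^+ k * r ^+ 'C(k.+1, 2) * qbin r N.+1 k.+1 = 1.
  have := sum_qbin_alternating r N; rewrite big_ord_recl qbin0 bin0n !expr0 !mul1r.
  under eq_bigr do rewrite lift0 exprS mulN1r !mulNr.
  by rewrite sumrN => /eqP; rewrite subr_eq0 => /eqP <-.
under eq_bigr do rewrite -mulrA absorb mulrA.
by rewrite -mulr_suml alt1 mul1r.
Qed.

End QBinomialField.

Lemma bin2_mul2 m : ('C(m, 2) * 2 = m * m.-1)%N.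
Proof. by case: m => // m; elim: m => // m IHm; rewrite binS bin1 mulnDl IHm; nia. Qed.

Lemma nlam_cons x l : nlam (x :: l) = (nlam l + sumn l)%N.
Proof.
rewrite /nlam big_ord_recl mul0n add0n sumnE (big_nth 0%N) big_mkord -big_split.
by apply: eq_bigr => i _; rewrite lift0 /= mulSn addnC.
Qed.

Lemma nlam_add_col m mu : (size mu <= m)%N -> nlam (add_col m mu) = (nlam mu + 'C(m, 2))%N.
Proof.
elim: mu m => [|x mu IHmu] m le_mu_m.
  have nlam_nil : nlam [::] = 0%N by rewrite /nlam big_ord0.
  rewrite /add_col /= subn0 nlam_nil add0n; elim: m {le_mu_m} => // m IHm.
  by rewrite /= nlam_cons IHm sumn_nseq mul1n binS bin1.
case: m le_mu_m => // m le_mu_m.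
rewrite /add_col /= subSS -/(add_col m mu) !nlam_cons IHmu // sumn_add_col // binS bin1.
by rewrite addnACA.
Qed.

Lemma count_add_col1 m mu :
  all (fun x => 0 < x)%N mu -> count_mem 1%N (add_col m mu) = (m - size mu)%N.
Proof.
move=> pos_mu; rewrite count_cat count_nseq /= mul1n count_map.
rewrite (eq_in_count (a2 := pred0)) ?count_pred0 // => x /(allP pos_mu).
by rewrite /= eqSS; case: x.
Qed.

Lemma count_add_colS m mu i : (0 < i)%N -> count_mem i.+1 (add_col m mu) = count_mem i mu.
Proof.
case: i => // i _; rewrite count_cat count_nseq /= mul0n addn0 count_map.
by apply: eq_count => x /=; rewrite eqSS.
Qed.

Lemma prod_qpoch_count_widen (R : comPzRingType) (x : R) l B B' :
  all (fun y => y <= B)%N l -> (B < B')%N ->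
  \prod_(1 <= i < B') qpoch x (count_mem i l) = \prod_(1 <= i < B.+1) qpoch x (count_mem i l).
Proof.
move=> bound_l lt_BB'; rewrite (big_cat_nat _ (n := B.+1)) //= [X in _ * X]big_nat_cond.
rewrite [X in _ * X]big1 ?mulr1 // => i /andP[/andP[lt_Bi _] _].
suff -> : count_mem i l = 0%N by rewrite qpoch0.
by apply/count_memPn/negP => /(allP bound_l); rewrite leqNgt lt_Bi.
Qed.

Lemma a_lamE (x : rat) l :
  a_lam x l = x ^+ (sumn l + 2 * nlam l) * \prod_(1 <= i < (sumn l).+1) qpoch x^-1 (count_mem i l).
Proof. by congr (_ * _); apply: eq_bigr => i _; apply: eq_bigr => j _; rewrite exprVn. Qed.

Lemma a_lam_add_col (x : rat) m mu :
  (0 < m)%N -> (size mu <= m)%N -> all (fun y => 0 < y)%N mu ->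
  a_lam x (add_col m mu) = x ^+ (m * m) * qpoch x^-1 (m - size mu) * a_lam x mu.
Proof.
move=> m_gt0 le_mu_m pos_mu; rewrite !a_lamE sumn_add_col // nlam_add_col //.
have sum_gt0 : (0 < sumn mu + m)%N by rewrite addn_gt0 m_gt0 orbT.
rewrite big_nat_recl // count_add_col1 //.
under eq_big_nat => i /andP[i_gt0 _] do rewrite count_add_colS //.
have bound_mu : all (fun y => y <= sumn mu)%N mu by apply/allP => y /mem_leq_sumn.
have lt_sum : (sumn mu < sumn mu + m)%N by rewrite -{1}[sumn mu]addn0 ltn_add2l.
rewrite (prod_qpoch_count_widen _ bound_mu lt_sum).
have bin2m : ('C(m, 2) * 2 + m = m * m)%N.
  by rewrite bin2_mul2; case: (m) m_gt0 => // k _; rewrite mulnS addnC.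
by rewrite -bin2m !exprD exprM; ring.
Qed.

Section PartitionSums.
Variable Q : rat.
Hypothesis Q_gt1 : 1 < Q.
Local Notation r := Q^-1.

Lemma Q_neq0 : Q != 0.
Proof. by rewrite lt0r_neq0 // (lt_trans ltr01). Qed.

Lemma Qinv_not_root j : (0 < j)%N -> r ^+ j != 1.
Proof.
move=> j_gt0; rewrite exprVn invr_eq1 pexpr_eq1 ?gt_eqF //.
exact: le_trans ler01 (ltW Q_gt1).
Qed.

Definition inv_a_sum f n m := \sum_(l <- partitions f n m) (a_lam Q l)^-1.

Lemma inv_a_sumS f n m : (m < n)%N ->
  inv_a_sum f.+1 n m.+1 * qpoch r m.+1
  = r ^+ (m.+1 * m.+1)
    * \sum_(k < m.+2) qbin r m.+1 k * (inv_a_sum f (n - m.+1) k * qpoch r k).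
Proof.
move=> lt_mn; rewrite /inv_a_sum mulr_suml partitionsS lt_mn big_map big_flatten big_map.
rewrite -[iota 0 m.+2]/(index_iota 0 m.+2) big_mkord mulr_sumr.
apply: eq_bigr => k _; have le_km : (k <= m.+1)%N by rewrite -ltnS.
rewrite mulr_suml !mulr_sumr big_seq [RHS]big_seq; apply: eq_bigr => mu.
rewrite mem_partitions => /and4P[/andP[_ pos_mu] _ /eqP size_mu _].
rewrite a_lam_add_col ?size_mu // invfM; set a := (a_lam Q mu)^-1.
rewrite invfM -exprVn -(qbin_qpoch r le_km).
have := qpoch_neq0 Qinv_not_root (m.+1 - k); set c := qpoch r (m.+1 - k) => c_neq0.
by field.
Qed.

Lemma inv_a_sum0 f n : inv_a_sum f n 0 = (n == 0%N)%:R.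
Proof.
rewrite /inv_a_sum partitions0; case: n => [|n]; last by rewrite big_nil.
by rewrite big_seq1 /a_lam /nlam big_ord0 big_geq // mulr1 invr1.
Qed.

Lemma inv_a_sum0S f k : inv_a_sum f 0 k.+1 = 0.
Proof. by case: f => [|f]; rewrite /inv_a_sum ?partitionsS big_nil. Qed.

Lemma inv_a_sumE f n m : (n < f)%N ->
  inv_a_sum f n.+1 m.+1 * qpoch r m.+1 = r ^+ (n.+1 + m.+1 * m) * qbin r n m.
Proof.
elim: f n m => // f IHf n m lt_nf; case: (leqP m n) => [le_mn | lt_nm]; last first.
  by rewrite /inv_a_sum partitionsS ltnS leqNgt lt_nm big_nil mul0r qbin_small ?mulr0.
rewrite inv_a_sumS ?ltnS // subSS big_ord_recl qbin0 qpoch0 mulr1 inv_a_sum0.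
under eq_bigr => k _ do rewrite lift0.
case def_N: (n - m)%N => [|N].
  have -> : n = m by lia.
  rewrite mul1r big1 ?addr0 ?qbinn ?mulr1 => [|k _]; last by rewrite inv_a_sum0S !mul0r mulr0.
  by congr (_ ^+ _); lia.
have lt_Nf : (N < f)%N by lia.
under eq_bigr => j _ do rewrite IHf //.
have -> : n = (N + m.+1)%N by lia.
rewrite mul1r mulr0n add0r -(qbin_convolution Qinv_not_root) !mulr_sumr.
apply: eq_bigr => j _.
transitivity (r ^+ (m.+1 * m.+1 + (N.+1 + j.+1 * j)) * (qbin r m.+1 j.+1 * qbin r N j)).
  by rewrite !exprD; ring.
rewrite (_ : m.+1 * m.+1 + _ = (N + m.+1).+1 + m.+1 * m + j * j.+1)%N; last by nia.
by rewrite !exprD; ring.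
Qed.

Lemma sum_numer_div_a_lam_size N k : (k <= N)%N ->
  \sum_(l <- partitions N.+1 N.+1 k.+1) numer Q l / a_lam Q l
  = r ^+ N.+1 * ((-1) ^+ k * r ^+ 'C(k.+1, 2) * qbin r N k / (1 - r ^+ k.+1)).
Proof.
move=> le_kN; transitivity (qpoch Q k * inv_a_sum N.+1 N.+1 k.+1).
  rewrite /inv_a_sum mulr_sumr big_seq [RHS]big_seq; apply: eq_bigr => l.
  by rewrite mem_partitions => /and4P[_ _ /eqP size_l _]; rewrite /numer size_l.
have /(canRL (mulfK (qpoch_neq0 Qinv_not_root k.+1)))-> := inv_a_sumE k (ltnSn N).
have -> : r ^+ (N.+1 + k.+1 * k) = r ^+ N.+1 * r ^+ 'C(k.+1, 2) * r ^+ 'C(k.+1, 2).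
  by rewrite -!exprD -addnA addnn -muln2 bin2_mul2.
rewrite (qpochV _ Q_neq0) qpochS.
have := qpoch_neq0 Qinv_not_root k; have := subr1X_neq0 Qinv_not_root k.
set c := 'C(k.+1, 2); set b := qpoch r k; set d := 1 - _ => d_neq0 b_neq0.
rewrite !exprVn; have Qc_neq0 : Q ^+ c != 0 by rewrite expf_neq0 ?Q_neq0.
have QN_neq0 : Q ^+ N.+1 != 0 by rewrite expf_neq0 ?Q_neq0.
by field; rewrite d_neq0 Qc_neq0 QN_neq0 b_neq0.
Qed.

Lemma sum_numer_div_a_lam n : (0 < n)%N ->
  \sum_(l <- all_partitions n) numer Q l / a_lam Q l = 1 / (Q ^+ n - 1).
Proof.
case: n => // N _.
transitivity (\sum_(m < N.+2) \sum_(l <- partitions N.+1 N.+1 m) numer Q l / a_lam Q l).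
  by rewrite /all_partitions big_flatten big_map -[iota 0 N.+2]/(index_iota 0 N.+2) big_mkord.
rewrite big_ord_recl partitions0 big_nil add0r.
under eq_bigr => k _ do rewrite lift0 (sum_numer_div_a_lam_size (N := N) (ltn_ord k)).
rewrite -mulr_sumr (sum_alt_qbin_div Qinv_not_root) exprVn.
have : 1 < Q ^+ N.+1 by rewrite exprn_egt1.
set x := Q ^+ N.+1 => x_gt1.
by field; rewrite subr_eq0 !gt_eqF // (lt_trans ltr01).
Qed.

End PartitionSums.

Theorem lemma6p2 (q n : nat) :
  prime_power q -> (1 <= n)%N ->
  \sum_(t : n.-tuple 'I_n.+1 | is_part_tuple t)
     numer q%:R (parts t) / a_lam q%:R (parts t)
  = 1 / ((q%:R : rat) ^+ n - 1).
Proof.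
move=> [p [k [p_prime k_gt0 ->]]] n_gt0.
have q_gt1 : 1 < (p ^ k)%:R :> rat.
  by rewrite ltr1n (leq_ltn_trans k_gt0) // ltn_expl // prime_gt1.
by rewrite (sum_part_tuples n (fun l => numer _ l / a_lam _ l)) sum_numer_div_a_lam.
Qed.
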